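(* The basin $\mathcal W^s(\mathcal B)$ contains the low temperature cylinder $\{(\phi,t)\in\mathcal C:\ t\le t_c\}\setminus\{\beta_c,\beta_c'\}$, where $\beta_c=(0,t_c)$ and $\beta_c'=(\pi,t_c)$.
   Context: $\mathcal C=(\mathbb R/2\pi\mathbb Z)\times[0,1]$ with coordinates $(\phi,t)$, $z=e^{i\phi}$, and $\mathcal R(z,t)=\big(\frac{z^2+t^2}{z^{-2}+t^2},\frac{z^2+z^{-2}+2}{z^2+z^{-2}+t^2+t^{-2}}\big)$, which maps $\mathcal C$ to itself (undefined only at $(\pm\pi/2,1)$). $\mathcal B=\{t=0\}$ is the bottom circle and $\mathcal W^s(\mathcal B)$ is the set of $x\in\mathcal C$ whose orbit is defined and converges to $\mathcal B$. $t_c\approx0.2956$ is the unique solution in $(0,1)$ of $(1+t^2)^2=4t$ (the repelling fixed point of $\mathcal R$ on $\{\phi=0\}$). *)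

From Stdlib Require Import Reals.
From Coquelicot Require Import Coquelicot.

(* A point of the cylinder C = (R/2piZ) x [0,1] is represented by (z, t)
   with z = e^{i phi} on the unit circle (Cmod z = 1) and 0 <= t <= 1. *)
Definition cpt : Type := (Complex.C * R)%type.

Definition in_cylinder (p : cpt) : Prop :=
  Cmod (fst p) = 1 /\ 0 <= snd p <= 1.

(* R is undefined exactly at (phi,t) = (+-pi/2, 1), i.e. z = +-i, t = 1. *)
Definition R_undefined (p : cpt) : Prop :=
  snd p = 1 /\ (fst p = Ci \/ fst p = Copp Ci).

(* The map R(z,t) = ((z^2+t^2)/(z^-2+t^2),
                      (z^2+z^-2+2)/(z^2+z^-2+t^2+t^-2)).
   The second component is written with the factor t^2 cleared,
   t^2 (z^2+z^-2+2) / (t^4 + t^2 (z^2+z^-2) + 1), which equals the paper's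
   expression for t > 0 and gives its continuous extension (= 0) at t = 0.
   For |z| = 1 this quantity is real; we take its real part. *)
Definition Rmap (p : cpt) : cpt :=
  let z := fst p in
  let t := snd p in
  let w := Cplus (Cmult z z) (Cinv (Cmult z z)) in
  ( Cdiv (Cplus (Cmult z z) (RtoC (t ^ 2)))
         (Cplus (Cinv (Cmult z z)) (RtoC (t ^ 2))),
    Re (Cdiv (Cmult (RtoC (t ^ 2)) (Cplus w (RtoC 2)))
             (Cplus (Cplus (RtoC (t ^ 4)) (Cmult (RtoC (t ^ 2)) w)) (RtoC 1))) ).

Definition orbit (n : nat) (p : cpt) : cpt := Nat.iter n Rmap p.

(* W^s(B): the orbit is defined (never hits an undefined point) and
   converges to the bottom circle B = {t = 0}; the distance from (phi,t)
   to B is t, so convergence to B means t_n -> 0. *)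
Definition in_basin_B (p : cpt) : Prop :=
  (forall n : nat, ~ R_undefined (orbit n p)) /\
  is_lim_seq (fun n => snd (orbit n p)) 0.

(* On the unit circle only c = Re(z^2) = cos 2phi enters the height update:
   t' = t^2 (2c + 2) / (t^4 + 2 c t^2 + 1), which increases with c and is
   largest, equal to 4 t^2 / (1 + t^2)^2 = q(t) t, when z = +-1.  The rate
   q(t) = 4 t / (1 + t^2)^2 is increasing on [0, 1/3] and equals 1 exactly at
   t_c < 1/3, so below t_c the heights decrease at least geometrically with
   ratio q(t_0) < 1.  At height t_c any z <> +-1 has c < 1, hence the first
   step already lands strictly below t_c. *)
From Stdlib Require Import Reals Lra Psatz.
From Coquelicot Require Import Coquelicot.
Open Scope R_scope.

Definition on_unit_circle (z : Complex.C) : Prop := fst z ^ 2 + snd z ^ 2 = 1.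

Lemma Cmod_eq1_on_unit_circle (z : Complex.C) : Cmod z = 1 -> on_unit_circle z.
Proof.
  unfold Cmod, on_unit_circle; intros Hmod.
  assert (Hpos : 0 <= fst z ^ 2 + snd z ^ 2) by nra.
  rewrite <- (sqrt_sqrt _ Hpos), Hmod; ring.
Qed.

Lemma on_unit_circle_Re_sqr_bound (z : Complex.C) :
  on_unit_circle z -> -1 <= Re (Cmult z z) <= 1.
Proof. destruct z as [a b]; unfold on_unit_circle; simpl; intros; nra. Qed.

Lemma on_unit_circle_Re_sqr_lt1 (z : Complex.C) :
  on_unit_circle z -> z <> RtoC 1 -> z <> RtoC (-1) -> Re (Cmult z z) < 1.
Proof.
  destruct z as [a b]; unfold on_unit_circle, RtoC; simpl; intros Hz H1 Hm1.
  destruct (Rlt_or_le (a * a - b * b) 1) as [Hlt | Hge]; [exact Hlt |].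
  assert (Hb : b = 0) by nra; subst b.
  assert (Ha : (a - 1) * (a + 1) = 0) by nra.
  destruct (Rmult_integral _ _ Ha); [elim H1 | elim Hm1]; f_equal; lra.
Qed.

(* [c] stands for Re(z^2). *)
Definition height_map (c t : R) : R := t ^ 2 * (2 * c + 2) / (t ^ 4 + 2 * c * t ^ 2 + 1).

Lemma height_denom_pos (c t : R) :
  -1 <= c <= 1 -> 0 <= t < 1 -> 0 < t ^ 4 + 2 * c * t ^ 2 + 1.
Proof.
  intros Hc Ht.
  (* t^4 + 2 c t^2 + 1 = (1 - t^2)^2 + 2 (1 + c) t^2 *)
  assert (0 < (1 - t ^ 2) ^ 2) by (apply pow_lt; nra).
  assert (0 <= (1 + c) * t ^ 2) by (apply Rmult_le_pos; nra).
  nra.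
Qed.

Lemma Rmap_on_unit_circle (z : Complex.C) (t : R) :
  on_unit_circle z -> 0 <= t < 1 ->
  on_unit_circle (fst (Rmap (z, t))) /\ snd (Rmap (z, t)) = height_map (Re (Cmult z z)) t.
Proof.
  destruct z as [a b]; unfold on_unit_circle, height_map; simpl fst; simpl snd.
  intros Hz Ht.
  unfold Rmap, Cdiv, Cinv, Cplus, Cmult, RtoC, Re; simpl.
  assert (Hsq : (a * a - b * b) * ((a * a - b * b) * 1) + (a * b + b * a) * ((a * b + b * a) * 1) = 1)
    by nra.
  rewrite Hsq.
  assert (Hc : -1 <= a * a - b * b <= 1) by nra.
  assert (Hcs : (a * a - b * b) ^ 2 + (a * b + b * a) ^ 2 = 1) by nra.
  set (c := a * a - b * b) in *; set (s := a * b + b * a) in *; clearbody c s.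
  pose proof (height_denom_pos c t Hc Ht).
  assert (0 < (c + t ^ 2) ^ 2 + s ^ 2) by nra.
  unfold Rdiv; rewrite Rinv_1, !Rmult_1_r.
  split; field; nra.
Qed.

Lemma height_map_nonneg (c t : R) : -1 <= c <= 1 -> 0 <= t < 1 -> 0 <= height_map c t.
Proof.
  intros Hc Ht; pose proof (height_denom_pos c t Hc Ht).
  unfold height_map, Rdiv; apply Rmult_le_pos; [nra | apply Rlt_le, Rinv_0_lt_compat; lra].
Qed.

Lemma height_map_1_sub (c t : R) : -1 <= c <= 1 -> 0 <= t < 1 ->
  height_map 1 t - height_map c t =
  2 * t ^ 2 * (1 - c) * (1 - t ^ 2) ^ 2 / ((1 + t ^ 2) ^ 2 * (t ^ 4 + 2 * c * t ^ 2 + 1)).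
Proof.
  intros Hc Ht; pose proof (height_denom_pos c t Hc Ht).
  unfold height_map; field; split; nra.
Qed.

Lemma height_map_le_1 (c t : R) : -1 <= c <= 1 -> 0 <= t < 1 -> height_map c t <= height_map 1 t.
Proof.
  intros Hc Ht; pose proof (height_denom_pos c t Hc Ht).
  assert (0 <= height_map 1 t - height_map c t); [| lra].
  rewrite (height_map_1_sub c t Hc Ht); unfold Rdiv.
  apply Rmult_le_pos; [| apply Rlt_le, Rinv_0_lt_compat; nra].
  apply Rmult_le_pos; [apply Rmult_le_pos | apply pow2_ge_0]; nra.
Qed.

Lemma height_map_lt_1 (c t : R) : -1 <= c < 1 -> 0 < t < 1 -> height_map c t < height_map 1 t.
Proof.
  intros Hc Ht.
  assert (Hc' : -1 <= c <= 1) by lra; assert (Ht' : 0 <= t < 1) by lra.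
  pose proof (height_denom_pos c t Hc' Ht').
  assert (0 < height_map 1 t - height_map c t); [| lra].
  rewrite (height_map_1_sub c t Hc' Ht'); unfold Rdiv.
  assert (0 < (1 - t ^ 2) ^ 2) by (apply pow_lt; nra).
  apply Rmult_lt_0_compat; [| apply Rinv_0_lt_compat; nra].
  apply Rmult_lt_0_compat; [apply Rmult_lt_0_compat |]; nra.
Qed.

Definition contraction_rate (t : R) : R := 4 * t / (1 + t ^ 2) ^ 2.

Lemma height_map_1_eq (t : R) : height_map 1 t = contraction_rate t * t.
Proof. unfold height_map, contraction_rate; field; nra. Qed.

Lemma contraction_rate_nonneg (t : R) : 0 <= t -> 0 <= contraction_rate t.
Proof.
  intros Ht; unfold contraction_rate, Rdiv.
  apply Rmult_le_pos; [lra | apply Rlt_le, Rinv_0_lt_compat; nra].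
Qed.

Lemma contraction_rate_le (s t : R) : 0 <= s <= t -> t < 1 / 3 ->
  contraction_rate s <= contraction_rate t.
Proof.
  intros Hs Ht; unfold contraction_rate.
  assert (E : t * (1 + s ^ 2) ^ 2 - s * (1 + t ^ 2) ^ 2
              = (t - s) * (1 - 2 * s * t - s * t * (t ^ 2 + t * s + s ^ 2))) by ring.
  assert (0 <= s * t <= 1 / 9) by nra.
  assert (0 <= s * t * (t ^ 2 + t * s + s ^ 2) <= 1 / 27) by nra.
  assert (0 <= (t - s) * (1 - 2 * s * t - s * t * (t ^ 2 + t * s + s ^ 2)))
    by (apply Rmult_le_pos; lra).
  assert (0 < (1 + s ^ 2) ^ 2) by nra; assert (0 < (1 + t ^ 2) ^ 2) by nra.
  apply Rmult_le_reg_r with ((1 + s ^ 2) ^ 2 * (1 + t ^ 2) ^ 2); [nra |].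
  replace (4 * s / (1 + s ^ 2) ^ 2 * ((1 + s ^ 2) ^ 2 * (1 + t ^ 2) ^ 2))
    with (4 * (s * (1 + t ^ 2) ^ 2)) by (field; nra).
  replace (4 * t / (1 + t ^ 2) ^ 2 * ((1 + s ^ 2) ^ 2 * (1 + t ^ 2) ^ 2))
    with (4 * (t * (1 + s ^ 2) ^ 2)) by (field; nra).
  lra.
Qed.

Lemma Rmap_contract (p : cpt) (t0 : R) :
  on_unit_circle (fst p) -> 0 <= snd p <= t0 -> t0 < 1 / 3 ->
  on_unit_circle (fst (Rmap p)) /\ 0 <= snd (Rmap p) <= contraction_rate t0 * snd p.
Proof.
  destruct p as [z t]; intros Hz Ht Ht0; cbn [fst snd] in Hz, Ht |- *.
  destruct (Rmap_on_unit_circle z t Hz ltac:(lra)) as [Hz' Hh].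
  pose proof (on_unit_circle_Re_sqr_bound z Hz) as Hc.
  split; [exact Hz' |]; rewrite Hh.
  split; [apply height_map_nonneg; lra |].
  apply Rle_trans with (height_map 1 t); [apply height_map_le_1; lra |].
  rewrite height_map_1_eq.
  apply Rmult_le_compat_r; [lra | apply contraction_rate_le; lra].
Qed.

Lemma orbit_contract (p : cpt) (t0 : R) :
  on_unit_circle (fst p) -> 0 <= snd p <= t0 -> t0 < 1 / 3 -> contraction_rate t0 <= 1 ->
  forall n, on_unit_circle (fst (orbit n p)) /\
            0 <= snd (orbit n p) <= contraction_rate t0 ^ n * t0.
Proof.
  intros Hz Ht Ht0 Hq1.
  pose proof (contraction_rate_nonneg t0 ltac:(lra)) as Hq0.
  induction n as [| n [Hzn Htn]]; [simpl; split; [exact Hz | lra] |].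
  assert (Hqn : contraction_rate t0 ^ n <= 1) by (rewrite <- (pow1 n); apply pow_incr; lra).
  change (orbit (S n) p) with (Rmap (orbit n p)).
  destruct (Rmap_contract (orbit n p) t0 Hzn ltac:(nra) Ht0) as [Hz' Ht'].
  split; [exact Hz' |]; simpl pow.
  assert (contraction_rate t0 * snd (orbit n p)
          <= contraction_rate t0 * (contraction_rate t0 ^ n * t0))
    by (apply Rmult_le_compat_l; lra).
  lra.
Qed.

Lemma in_basin_B_contract (p : cpt) (t0 : R) :
  on_unit_circle (fst p) -> 0 <= snd p <= t0 -> t0 < 1 / 3 -> contraction_rate t0 < 1 ->
  in_basin_B p.
Proof.
  intros Hz Ht Ht0 Hq1.
  pose proof (orbit_contract p t0 Hz Ht Ht0 ltac:(lra)) as Horb.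
  pose proof (contraction_rate_nonneg t0 ltac:(lra)) as Hq0.
  split.
  - intros n [Hn1 _]; destruct (Horb n) as [_ Htn].
    assert (contraction_rate t0 ^ n <= 1) by (rewrite <- (pow1 n); apply pow_incr; lra).
    nra.
  - apply is_lim_seq_le_le with (u := fun _ => 0) (w := fun n => contraction_rate t0 ^ n * t0).
    + intros n; apply (Horb n).
    + apply is_lim_seq_const.
    + replace (Finite 0) with (Rbar_mult 0 t0) by (simpl; f_equal; ring).
      apply is_lim_seq_scal_r, is_lim_seq_geom; rewrite Rabs_pos_eq; lra.
Qed.

Lemma in_basin_B_Rmap (p : cpt) : ~ R_undefined p -> in_basin_B (Rmap p) -> in_basin_B p.
Proof.
  intros Hp [Hdef Hlim].
  assert (Horbit : forall n, orbit (S n) p = orbit n (Rmap p))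
    by (intros n; apply Nat.iter_succ_r).
  split.
  - intros [| n]; [exact Hp | rewrite Horbit; apply Hdef].
  - apply is_lim_seq_incr_1; eapply is_lim_seq_ext; [| exact Hlim].
    intros n; rewrite Horbit; reflexivity.
Qed.

Section CriticalHeight.

Variable tc : R.
Hypothesis Htc : 0 < tc < 1.
Hypothesis Htc_eq : (1 + tc ^ 2) ^ 2 = 4 * tc.

Lemma tc_cubic : tc ^ 3 + tc ^ 2 + 3 * tc = 1.
Proof.
  assert (E : (1 + tc ^ 2) ^ 2 - 4 * tc = (1 - tc) * (1 - 3 * tc - tc ^ 2 - tc ^ 3)) by ring.
  rewrite Htc_eq in E.
  destruct (Rmult_integral (1 - tc) (1 - 3 * tc - tc ^ 2 - tc ^ 3)) as [H | H]; lra.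
Qed.

Lemma tc_lt_third : tc < 1 / 3.
Proof. pose proof tc_cubic; nra. Qed.

Lemma contraction_rate_tc : contraction_rate tc = 1.
Proof. unfold contraction_rate; rewrite Htc_eq; field; lra. Qed.

Lemma contraction_rate_lt1 (t : R) : 0 <= t < tc -> contraction_rate t < 1.
Proof.
  intros Ht; pose proof tc_cubic.
  assert (E : (1 + t ^ 2) ^ 2 - 4 * t = (1 - t) * (1 - 3 * t - t ^ 2 - t ^ 3)) by ring.
  assert (t * t <= tc * tc) by (apply Rmult_le_compat; lra).
  assert (t * t * t <= tc * tc * tc) by (apply Rmult_le_compat; nra).
  assert (0 < (1 - t) * (1 - 3 * t - t ^ 2 - t ^ 3)) by (apply Rmult_lt_0_compat; simpl; lra).
  unfold contraction_rate; apply Rmult_lt_reg_r with ((1 + t ^ 2) ^ 2); [nra |].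
  unfold Rdiv; rewrite Rmult_assoc, Rinv_l by nra; lra.
Qed.

Lemma in_basin_B_below_tc (p : cpt) (t0 : R) :
  on_unit_circle (fst p) -> 0 <= snd p <= t0 -> t0 < tc -> in_basin_B p.
Proof.
  intros Hz Ht Ht0; pose proof tc_lt_third.
  apply (in_basin_B_contract p t0 Hz Ht); [lra | apply contraction_rate_lt1; lra].
Qed.

End CriticalHeight.

Theorem lemma9p1 (tc : R) (Htc : 0 < tc < 1) (Htc_eq : (1 + tc ^ 2) ^ 2 = 4 * tc)
  (z : Complex.C) (t : R) :
  in_cylinder (z, t) -> t <= tc ->
  (z, t) <> (RtoC 1, tc) -> (z, t) <> (RtoC (-1), tc) ->
  in_basin_B (z, t).
Proof.
  intros [Hmod Ht] Hle Hn1 Hn2; simpl in Hmod, Ht.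
  pose proof (Cmod_eq1_on_unit_circle z Hmod) as Hz.
  destruct (Rle_lt_or_eq_dec t tc Hle) as [Hlt | ->].
  - exact (in_basin_B_below_tc tc Htc Htc_eq (z, t) t Hz ltac:(simpl; lra) Hlt).
  - apply in_basin_B_Rmap; [intros [H1 _]; simpl in H1; lra |].
    destruct (Rmap_on_unit_circle z tc Hz ltac:(lra)) as [Hz' Hh].
    assert (Hc : -1 <= Re (Cmult z z) < 1).
    { split; [apply on_unit_circle_Re_sqr_bound | apply on_unit_circle_Re_sqr_lt1];
        auto; congruence. }
    assert (Hdrop : snd (Rmap (z, tc)) < tc).
    { rewrite Hh; apply Rlt_le_trans with (height_map 1 tc); [apply height_map_lt_1; lra |].
      rewrite height_map_1_eq, (contraction_rate_tc tc Htc Htc_eq); lra. }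
    apply (in_basin_B_below_tc tc Htc Htc_eq _ (snd (Rmap (z, tc))) Hz'); [| exact Hdrop].
    rewrite Hh; split; [apply height_map_nonneg; lra | lra].
Qed.
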